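(* Let $n \in \mathbb{Z}_{\geqslant 2}$ and $m \in \mathbb{Z}_{\geqslant 1}$. Then $$\prod_{j=1}^{\infty}\left(1 - \frac{1}{n^j}\right) n^{\varphi(m)} \leqslant \Phi_m(n) \leqslant \prod_{j=1}^{\infty}\left(1 - \frac{1}{n^j}\right)^{-1} n^{\varphi(m)}.$$
   Context: $\Phi_m(X)$ denotes the $m$th cyclotomic polynomial and $\varphi$ is Euler's totient function. *)

From HB Require Import structures.
From mathcomp Require Import all_boot all_order all_algebra all_field.
From mathcomp Require Import all_classical all_reals all_analysis.
Set Implicit Arguments. Unset Strict Implicit. Unset Printing Implicit Defensive.
Import Order.TTheory GRing.Theory Num.Theory.
Import numFieldNormedType.Exports.
Local Open Scope ring_scope.

Definition euler_partial (R : realType) (n : nat) (N : nat) : R :=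
  \prod_(1 <= j < N.+1) (1 - (n%:R ^+ j)^-1).

(* The infinite product prod_{j>=1} (1 - 1/n^j), as the limit of the
   partial products (which converge for n >= 2). *)
Definition euler_prod (R : realType) (n : nat) : R :=
  limn (euler_partial R n).

From HB Require Import structures.
From mathcomp Require Import all_boot all_order all_algebra all_field.
From mathcomp Require Import all_classical all_reals all_analysis.
From mathcomp Require Import cyclic lra.

(* Evaluating 'X^k - 1 = \prod_(d %| k) 'Phi_d at n and dividing by
   n^k = n^(\sum_(d %| k) totient d) shows that b d := Phi_d(n) / n^totient(d)
   satisfies \prod_(d %| k) b d = 1 - n^-k. Moebius inversion then gives
   b m = \prod_(d %| m) (1 - n^-(m/d))^mu(d). As mu(d) is -1, 0 or 1 and every
   factor lies in (0, 1], b m lies between P and P^-1, where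
   P = \prod_(d %| m) (1 - n^-d) dominates the infinite product
   \prod_(j >= 1) (1 - n^-j), which is positive for n >= 2. *)

Set Implicit Arguments.
Unset Strict Implicit.
Unset Printing Implicit Defensive.

Import Order.TTheory GRing.Theory Num.Theory.
Import numFieldNormedType.Exports.

Section BigDivisors.
Variables (R : Type) (idx : R) (op : Monoid.com_law idx).

Lemma big_divisors_nat m (F : nat -> R) : (0 < m)%N ->
  \big[op/idx]_(d <- divisors m) F d = \big[op/idx]_(0 <= d < m.+1 | d %| m) F d.
Proof.
move=> m_gt0; rewrite -[RHS]big_filter; apply: perm_big; apply: uniq_perm.
- exact: divisors_uniq.
- by rewrite filter_uniq ?iota_uniq.
move=> d; rewrite mem_filter mem_index_iota -dvdn_divisors //.
by case: (boolP (d %| m)) => //= d_m; rewrite ltnS dvdn_leq.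
Qed.

Lemma big_divisors_dvd m k (P : pred nat) (F : nat -> R) :
    (0 < m)%N -> (k %| m)%N ->
  \big[op/idx]_(d <- divisors k | P d) F d
    = \big[op/idx]_(d <- divisors m | (d %| k) && P d) F d.
Proof.
move=> m_gt0 k_m; have k_gt0 := dvdn_gt0 m_gt0 k_m.
rewrite -big_filter -[RHS]big_filter; apply: perm_big; apply: uniq_perm.
- by rewrite filter_uniq ?divisors_uniq.
- by rewrite filter_uniq ?divisors_uniq.
move=> d; rewrite !mem_filter -!dvdn_divisors //.
by case: (boolP (d %| k)) => [d_k | _]; rewrite ?andbF // (dvdn_trans d_k k_m) andbT.
Qed.

Lemma big_divisors_div m (F : nat -> R) : (0 < m)%N ->
  \big[op/idx]_(d <- divisors m) F (m %/ d) = \big[op/idx]_(d <- divisors m) F d.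
Proof.
move=> m_gt0; rewrite -(big_map (divn m) xpredT); apply: perm_big; apply: uniq_perm.
- rewrite map_inj_in_uniq ?divisors_uniq // => d e.
  rewrite -!dvdn_divisors // => d_m e_m de.
  by rewrite -(mulKn d m_gt0) -(mulKn e m_gt0) -!divnA // de.
- exact: divisors_uniq.
move=> d; rewrite -dvdn_divisors //; apply/mapP/idP=> [[e e_m ->] | d_m].
  by rewrite dvdn_div // dvdn_divisors.
by exists (m %/ d); rewrite ?divnA // -?dvdn_divisors ?dvdn_div // mulKn.
Qed.

Lemma big_divisors_mull p q (F : nat -> R) : (0 < p)%N -> (0 < q)%N ->
  \big[op/idx]_(d <- divisors (p * q) | p %| d) F d
    = \big[op/idx]_(c <- divisors q) F (p * c)%N.
Proof.
move=> p_gt0 q_gt0; have pq_gt0 : (0 < p * q)%N by rewrite muln_gt0 p_gt0.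
rewrite -big_filter -(big_map (muln p) xpredT); apply: perm_big; apply: uniq_perm.
- by rewrite filter_uniq ?divisors_uniq.
- by rewrite map_inj_uniq ?divisors_uniq // => c e /eqP; rewrite eqn_pmul2l // => /eqP.
move=> d; rewrite mem_filter -dvdn_divisors //.
apply/andP/mapP=> [[/dvdnP[c ->] cp_pq] | [c]].
  exists c; last exact: mulnC.
  by rewrite -dvdn_divisors // -(dvdn_pmul2l p_gt0) mulnC.
by rewrite -dvdn_divisors // => c_q ->; rewrite dvdn_mulr // dvdn_pmul2l.
Qed.

End BigDivisors.

Definition squarefree n := all (fun p => ~~ (p * p %| n)) (primes n).

(* [primes 0 = [::]], so [moebius 0 = 1]; only positive arguments matter. *)
Definition moebius n : int :=
  if squarefree n then ((-1) ^+ size (primes n))%R else 0%R.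

Lemma perm_primes_mul_prime p d : prime p -> (0 < d)%N -> ~~ (p %| d) ->
  perm_eq (primes (p * d)) (p :: primes d).
Proof.
move=> p_pr d_gt0 p'd; apply: uniq_perm; rewrite ?primes_uniq //=.
  by rewrite primes_uniq mem_primes (negbTE p'd) !andbF.
by move=> q; rewrite primesM ?(prime_gt0 p_pr) // primes_prime // inE.
Qed.

Lemma moebius_mul_prime p d : prime p -> ~~ (p %| d) ->
  moebius (p * d) = (- moebius d)%R.
Proof.
move=> p_pr p'd.
have d_gt0 : (0 < d)%N by apply: contraR p'd; rewrite -eqn0Ngt => /eqP->.
have primes_pd := perm_primes_mul_prime p_pr d_gt0 p'd.
rewrite /moebius (perm_size primes_pd) /=.
have -> : squarefree (p * d) = squarefree d.
  rewrite /squarefree (perm_all _ primes_pd) /= dvdn_pmul2l ?prime_gt0 // p'd.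
  apply: eq_in_all => q; rewrite mem_primes => /and3P[q_pr _ q_d].
  have q_neq_p : q != p by apply: contraNneq p'd => <-.
  by rewrite Gauss_dvdr // coprimeMl !prime_coprime // dvdn_prime2 // q_neq_p.
by case: (squarefree d); rewrite ?exprS ?mulN1r ?oppr0.
Qed.

Lemma moebius_mul_prime_dvd p d : prime p -> (0 < d)%N -> p %| d ->
  moebius (p * d) = 0%R.
Proof.
move=> p_pr d_gt0 p_d; rewrite /moebius.
suff /negbTE-> : ~~ squarefree (p * d) by [].
apply/allPn; exists p; last by rewrite negbK dvdn_pmul2l ?prime_gt0.
by rewrite mem_primes p_pr muln_gt0 prime_gt0 // d_gt0 dvdn_mulr.
Qed.

Local Open Scope ring_scope.

Lemma norm_moebius_le1 n : `|moebius n| <= 1.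
Proof. by rewrite /moebius; case: squarefree; rewrite ?normrX ?normrN1 ?expr1n. Qed.

(* For a prime p %| k = p * q, the divisors of k divisible by p are the p * c
   with c %| q, and moebius (p * c) cancels moebius c when p does not divide c. *)
Lemma sum_moebius_divisors k : (0 < k)%N ->
  \sum_(d <- divisors k) moebius d = (k == 1)%:Z.
Proof.
move=> k_gt0; have [-> | k_neq1] := eqVneq k 1.
  by rewrite (_ : divisors 1 = [:: 1]) // big_seq1.
have k_gt1 : (1 < k)%N by rewrite ltn_neqAle eq_sym k_neq1.
have [p p_pr /dvdnP[q def_k]] := pdivP k_gt1.
have pq_gt0 : (0 < p * q)%N by rewrite mulnC -def_k.
have q_gt0 : (0 < q)%N by move: pq_gt0; rewrite muln_gt0 => /andP[].
rewrite def_k mulnC (bigID (fun d => p %| d)%N) /= big_divisors_mull ?(prime_gt0 p_pr) //.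
have p_coprime d : ~~ (p %| d)%N -> coprime d p.
  by rewrite coprime_sym prime_coprime.
have -> : \sum_(d <- divisors (p * q) | ~~ (p %| d)%N) moebius d
          = \sum_(d <- divisors q | ~~ (p %| d)%N) moebius d.
  rewrite [RHS](big_divisors_dvd _ _ _ pq_gt0 (dvdn_mull p (dvdnn q))).
  rewrite [LHS]big_seq_cond [RHS]big_seq_cond; apply: eq_bigl => d.
  rewrite -dvdn_divisors //.
  case: (boolP (p %| d)%N) => [_ | p'd]; rewrite ?andbF ?andbT //.
  by rewrite mulnC (Gauss_dvdl _ (p_coprime _ p'd)) andbb.
rewrite big_seq (bigID (fun c => p %| c)%N) /= big1 => [|c /andP[c_q p_c]].
  rewrite add0r -big_seq_cond (eq_bigr (fun c => - moebius c)) ?sumrN ?addNr //.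
  by move=> c p'c; rewrite moebius_mul_prime.
by rewrite moebius_mul_prime_dvd // (dvdn_gt0 q_gt0) // dvdn_divisors.
Qed.

Lemma prodfXzl (F : fieldType) (I : Type) (r : seq I) (P : pred I)
    (f : I -> F) (z : int) :
  \prod_(i <- r | P i) f i ^ z = (\prod_(i <- r | P i) f i) ^ z.
Proof.
by rewrite (big_morph (fun x => x ^ z) (fun x y => expfzMl x y z) (exp1rz F z)).
Qed.

Lemma prodfXzr (F : fieldType) (I : Type) (r : seq I) (P : pred I)
    (x : F) (f : I -> int) : x != 0 ->
  \prod_(i <- r | P i) x ^ f i = x ^ (\sum_(i <- r | P i) f i).
Proof.
move=> x_neq0.
by rewrite (big_morph (fun z => x ^ z) (fun u v => expfzDr u v x_neq0) (expr0z x)).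
Qed.

Section MoebiusInversion.
Variables (F : fieldType) (a b : nat -> F) (m : nat).
Hypotheses (m_gt0 : (0 < m)%N) (a_neq0 : forall k, (k %| m)%N -> a k != 0).
Hypothesis a_prod : forall k, (k %| m)%N -> a k = \prod_(d <- divisors k) b d.

(* Both sides are products over the pairs (d, e) with d * e %| m; summing the
   exponents of b e gives \sum_(d %| m %/ e) moebius d = (e == m). *)
Lemma moebius_inversion :
  b m = \prod_(d <- divisors m) a (m %/ d)%N ^ moebius d.
Proof.
have b_neq0 e : e \in divisors m -> b e != 0.
  rewrite -dvdn_divisors // => e_m; have e_gt0 := dvdn_gt0 m_gt0 e_m.
  move: (a_neq0 e_m); rewrite a_prod // prodf_seq_neq0 => /allP/(_ e).
  by rewrite -dvdn_divisors //; apply.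
have dvdn_div_sym d e : d \in divisors m -> e \in divisors m ->
    (e %| m %/ d)%N = (d %| m %/ e)%N.
  by rewrite -!dvdn_divisors // => d_m e_m; rewrite !dvdn_divRL // mulnC.
have a_div d : d \in divisors m ->
    a (m %/ d)%N ^ moebius d
      = \prod_(e <- divisors m | (e %| m %/ d)%N) b e ^ moebius d.
  rewrite -dvdn_divisors // => d_m.
  rewrite a_prod ?dvdn_div // prodfXzl (big_divisors_dvd _ xpredT _ m_gt0) ?dvdn_div //.
  by under eq_bigl do rewrite andbT.
rewrite (eq_big_seq _ a_div) (exchange_big_dep xpredT) //=.
have b_pow e : e \in divisors m ->
    \prod_(d <- divisors m | (e %| m %/ d)%N) b e ^ moebius d
      = b e ^ ((m %/ e)%N == 1%N)%:Z.
  move=> e_mem; have e_m : (e %| m)%N by move: e_mem; rewrite -dvdn_divisors.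
  rewrite big_seq_cond.
  rewrite (eq_bigl (fun d => (d \in divisors m) && ((d %| m %/ e)%N && true))).
    rewrite -big_seq_cond prodfXzr ?b_neq0 // -(big_divisors_dvd _ xpredT _ m_gt0).
      by rewrite sum_moebius_divisors // (divn_gt0 _ (dvdn_gt0 m_gt0 e_m)) dvdn_leq.
    exact: dvdn_div.
  by move=> d; rewrite andbT; case: (boolP (d \in divisors m)) => // /dvdn_div_sym->.
rewrite (eq_big_seq _ b_pow) (bigD1_seq m) ?divisors_id ?divisors_uniq //=.
rewrite divnn m_gt0 expr1z big1_seq ?mulr1 // => e /andP[e_neq_m].
rewrite -dvdn_divisors // => e_m; suff /negbTE-> : (m %/ e != 1)%N by rewrite expr0z.
by apply: contra e_neq_m => /eqP m_e1; rewrite -(divnK e_m) m_e1 mul1n.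
Qed.

End MoebiusInversion.

Lemma exprz_bounds (R : realFieldType) (x : R) (z : int) :
  0 < x <= 1 -> `|z| <= 1 -> x <= x ^ z <= x^-1.
Proof.
case/andP=> x_gt0 x_le1; have x_leV : x <= x^-1 by rewrite (le_trans x_le1) ?invf_ge1.
by case: z => [[|[|k]]|[|k]] //= _;
  rewrite ?expr0z ?expr1z ?NegzE ?exprN1 ?lexx ?x_le1 ?invf_ge1 ?x_leV.
Qed.

Lemma prod_exprz_bounds (R : realFieldType) (I : eqType) (r : seq I)
    (f : I -> R) (e : I -> int) :
  {in r, forall i, 0 < f i <= 1} -> (forall i, `|e i| <= 1) ->
  \prod_(i <- r) f i <= \prod_(i <- r) f i ^ e i <= (\prod_(i <- r) f i)^-1.
Proof.
move=> f_01 e_le1; rewrite -prodfV !big_seq.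
apply/andP; split; apply: ler_prod => i /f_01 f_i_01;
  have /andP[f_gt0 _] := f_i_01; have /andP[lo hi] := exprz_bounds f_i_01 (e_le1 i).
  by rewrite ltW.
by rewrite hi (le_trans (ltW f_gt0) lo).
Qed.

Lemma prod_le_prod_cond (R : numDomainType) (I : eqType) (r : seq I) (P : pred I)
    (f : I -> R) :
  {in r, forall i, 0 <= f i <= 1} -> \prod_(i <- r) f i <= \prod_(i <- r | P i) f i.
Proof.
move=> f_01; rewrite (bigID P) /= ler_piMr //.
  by rewrite big_seq_cond prodr_ge0 // => i /andP[/f_01/andP[]].
by rewrite big_seq_cond prodr_ile1 // => i /andP[/f_01].
Qed.

(* The extra term t ^+ N.+1 / 2 is what makes the induction go through. *)
Lemma prod_one_sub_expr_ge (R : realFieldType) (t : R) N : 0 < t <= 1 / 2 ->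
  1 / 4 + t ^+ N.+1 / 2 <= \prod_(1 <= j < N.+2) (1 - t ^+ j).
Proof.
case/andP=> t_gt0 t_le; elim: N => [|N IH]; first by rewrite big_nat1 expr1; lra.
rewrite big_nat_recr //= exprS; set w := t ^+ N.+1 in IH *.
have w_gt0 : 0 < w by rewrite exprn_gt0.
have tN_01 : 0 <= t ^+ N <= 1 by rewrite exprn_ge0 ?exprn_ile1 ?ltW //=; lra.
have w_le : w <= 1 / 2 by rewrite /w exprS; nra.
have tw_le : t * w <= 1 / 4 by nra.
have gain : 0 <= w * (1 / 2 - 3 / 4 * t - t * w / 2) by apply: mulr_ge0; nra.
nra.
Qed.

Section EulerProduct.
Variables (R : realType) (n : nat).
Hypothesis n_ge2 : (2 <= n)%N.

Let t : R := n%:R^-1.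

Let t_gt0_le_half : 0 < t <= 1 / 2.
Proof.
have n_gt0 : (0 < n)%N by rewrite (leq_trans _ n_ge2).
by rewrite invr_gt0 ltr0n n_gt0 mul1r lef_pV2 ?posrE ?ler_nat ?ltr0n.
Qed.

Lemma euler_partialE N : euler_partial R n N = \prod_(1 <= j < N.+1) (1 - t ^+ j).
Proof. by apply: eq_bigr => j _; rewrite exprVn. Qed.

Lemma euler_factor_gt0_le1 j : (0 < j)%N -> 0 < 1 - (n%:R ^+ j : R)^-1 <= 1.
Proof.
move=> j_gt0; have /andP[t_gt0 t_le] := t_gt0_le_half.
rewrite -exprVn -/t subr_gt0 gerBl exprn_ge0 ?exprn_ilt1 ?ltW -?lt0n ?andbT //.
lra.
Qed.

Lemma euler_partial_ge N : 1 / 4 <= euler_partial R n N.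
Proof.
case: N => [|N]; first by rewrite /euler_partial big_geq //; lra.
have /andP[t_gt0 _] := t_gt0_le_half.
rewrite euler_partialE (le_trans _ (prod_one_sub_expr_ge N t_gt0_le_half)) //.
by rewrite lerDl divr_ge0 ?exprn_ge0 ?ltW.
Qed.

Lemma euler_partial_nonincreasing : nonincreasing_seq (euler_partial R n).
Proof.
apply/nonincreasing_seqP => N; rewrite {1}/euler_partial big_nat_recr //=.
have /andP[_ factor_le1] := euler_factor_gt0_le1 (ltn0Sn N).
by rewrite ler_piMr // (le_trans _ (euler_partial_ge N)).
Qed.

Lemma euler_partial_cvg : cvgn (euler_partial R n).
Proof.
apply: nonincreasing_is_cvgn; first exact: euler_partial_nonincreasing.
by exists 0 => _ [N _ <-]; rewrite (le_trans _ (euler_partial_ge N)).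
Qed.

Lemma euler_prod_le_partial N : euler_prod R n <= euler_partial R n N.
Proof.
exact: nonincreasing_cvgn_ge euler_partial_nonincreasing euler_partial_cvg N.
Qed.

Lemma euler_prod_gt0 : 0 < euler_prod R n.
Proof.
apply: lt_le_trans (_ : 1 / 4 <= _); first by [].
apply: limr_ge; first exact: euler_partial_cvg.
by apply: nearW => N; exact: euler_partial_ge.
Qed.

End EulerProduct.

Lemma horner_prod_Cyclotomic (x : int) k : (0 < k)%N ->
  \prod_(d <- divisors k) ('Phi_d).[x] = x ^+ k - 1.
Proof. by move=> k_gt0; rewrite -horner_prod prod_Cyclotomic // !hornerE. Qed.

Lemma sum_totient_divisors k : (0 < k)%N ->
  (\sum_(d <- divisors k) totient d)%N = k.
Proof. by move=> k_gt0; rewrite big_divisors_nat // big_mkord sum_totient_dvd. Qed.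

Lemma Cyclotomic_horner_bounds (R : realType) n m : (2 <= n)%N -> (0 < m)%N ->
  euler_prod R n <= (('Phi_m).[n%:Z])%:~R / n%:R ^+ totient m
                 <= (euler_prod R n)^-1.
Proof.
move=> n_ge2 m_gt0; set x : R := n%:R.
have x_gt0 : 0 < x by rewrite ltr0n (leq_trans _ n_ge2).
pose a k := 1 - (x ^+ k)^-1.
pose b d := (('Phi_d).[n%:Z])%:~R / x ^+ totient d.
have a_01 k : (0 < k)%N -> 0 < a k <= 1 by exact: euler_factor_gt0_le1.
have a_prod k : (k %| m)%N -> a k = \prod_(d <- divisors k) b d.
  move=> k_m; have k_gt0 := dvdn_gt0 m_gt0 k_m.
  rewrite prodf_div -rmorph_prod horner_prod_Cyclotomic // prodrXr.
  rewrite sum_totient_divisors // rmorphB rmorphXn rmorph1 /= -/x.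
  by rewrite /a mulrBl divff ?mul1r // expf_neq0 // lt0r_neq0.
have a_neq0 k : (k %| m)%N -> a k != 0.
  by move=> k_m; have /andP[/lt0r_neq0] := a_01 k (dvdn_gt0 m_gt0 k_m).
rewrite -/(b m) (moebius_inversion m_gt0 a_neq0 a_prod).
set A := \prod_(d <- divisors m) a (m %/ d)%N.
have E_le_A : euler_prod R n <= A.
  rewrite /A big_divisors_div // big_divisors_nat // big_ltn_cond // dvd0n.
  rewrite eqn0Ngt m_gt0 /= (le_trans (euler_prod_le_partial R n_ge2 m)) //.
  rewrite prod_le_prod_cond // => j.
  by rewrite mem_index_iota => /andP[/a_01/andP[/ltW-> ->]].
have a_div_01 : {in divisors m, forall d, 0 < a (m %/ d)%N <= 1}.
  move=> d; rewrite -dvdn_divisors // => d_m.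
  by rewrite a_01 // (divn_gt0 _ (dvdn_gt0 m_gt0 d_m)) dvdn_leq.
have /andP[lo hi] := prod_exprz_bounds a_div_01 norm_moebius_le1.
apply/andP; split; first exact: le_trans E_le_A lo.
by rewrite (le_trans hi) // lef_pV2 ?posrE // (lt_le_trans (euler_prod_gt0 R n_ge2)).
Qed.

Theorem lemma2 (R : realType) (n m : nat) (hn : (2 <= n)%N) (hm : (1 <= m)%N) :
  euler_prod R n * n%:R ^+ totient m <= ((('Phi_m).[n%:Z] : int)%:~R : R)
  /\ ((('Phi_m).[n%:Z] : int)%:~R : R) <= (euler_prod R n)^-1 * n%:R ^+ totient m.
Proof.
have npow_gt0 : 0 < n%:R ^+ totient m :> R.
  by rewrite exprn_gt0 // ltr0n (leq_trans _ hn).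
have /andP[lo hi] := Cyclotomic_horner_bounds R hn hm.
by split; [rewrite -ler_pdivlMr | rewrite -ler_pdivrMr].
Qed.
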